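(* $\mathscr{F}_4\supseteq\mathscr{F}_{\mathrm{AIFV}}$.
   Context: $\mathcal{S}$ is a finite source alphabet with $|\mathcal{S}|\ge 2$ and $\mathcal{C}=\{0,1\}$; $\mathcal{A}^k,\mathcal{A}^{\ast},\mathcal{A}^{+}$ are sequences of length $k$, finite, positive finite length; $\lambda$ empty sequence; $\preceq$ prefix, $\prec$ proper prefix; $\mathrm{suff}(x_1\cdots x_n)=x_2\cdots x_n$. A code-tuple $F$ with $m\ge1$ code tables consists of maps $f_i:\mathcal{S}\to\mathcal{C}^{\ast}$ and $\tau_i:\mathcal{S}\to\{0,\dots,m-1\}$, $i\in[F]=\{0,\dots,m-1\}$; $|F|=m$. $f_i^{\ast}(\lambda)=\lambda$, $f_i^{\ast}(\pmb{x})=f_i(x_1)f^{\ast}_{\tau_i(x_1)}(\mathrm{suff}(\pmb{x}))$. For integer $k\ge0$, $\pmb{b}\in\mathcal{C}^{\ast}$: $\mathcal{P}^k_{F,i}(\pmb{b})$ is the set of $\pmb{c}\in\mathcal{C}^k$ such that some $\pmb{x}=x_1\cdots x_n\in\mathcal{S}^{+}$ has $f_i^{\ast}(\pmb{x})\succeq\pmb{b}\pmb{c}$ and $f_i(x_1)\succeq\pmb{b}$; $\bar{\mathcal{P}}^k_{F,i}(\pmb{b})$ the same with $f_i(x_1)\succ\pmb{b}$; $\mathcal{P}^k_{F,i}=\mathcal{P}^k_{F,i}(\lambda)$. $F$ is $2$-bit delay decodable ($F\in\mathscr{F}_{2\text{-}\mathrm{dec}}$) if $\mathcal{P}^2_{F,\tau_i(s)}\cap\bar{\mathcal{P}}^2_{F,i}(f_i(s))=\emptyset$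 for all $i,s$, and $\mathcal{P}^2_{F,\tau_i(s)}\cap\mathcal{P}^2_{F,\tau_i(s')}=\emptyset$ whenever $s\ne s'$, $f_i(s)=f_i(s')$. Fix $\mu:\mathcal{S}\to(0,1]$ with $\sum_s\mu(s)=1$; $Q(F)$ is the $|F|\times|F|$ matrix with $Q_{i,j}(F)=\sum_{s:\tau_i(s)=j}\mu(s)$; $F$ is regular ($F\in\mathscr{F}_{\mathrm{reg}}$) if $\pmb{\pi}Q(F)=\pmb{\pi}$, $\sum_i\pi_i=1$ has a unique solution. $\mathscr{F}_4$ is the set of $F\in\mathscr{F}_{\mathrm{reg}}\cap\mathscr{F}_{2\text{-}\mathrm{dec}}$ with $|F|=2$, $\mathcal{P}^2_{F,0}=\{00,01,10,11\}$ and $\mathcal{P}^2_{F,1}=\{01,10,11\}$. $\mathscr{F}_{\mathrm{AIFV}}$ is the set of code-tuples $F$ with $|F|=2$ satisfying: (i) $f_0,f_1$ injective; (ii) for all $i\in\{0,1\}$, $s$: $1\notin\bar{\mathcal{P}}^1_{F,i}(f_i(s))$ and $1\notin\bar{\mathcal{P}}^1_{F,i}(f_i(s)0)$; (iii) $f_i(s')\ne f_i(s)0$ for all $i,s,s'$; (iv) $\tau_i(s)=0$ if $\bar{\mathcal{P}}^0_{F,i}(f_i(s))=\emptyset$, and $\tau_i(s)=1$ otherwise; (v) $f_1(s)\ne\lambda$ and $f_1(s)\ne0$ for all $s$; (vi) $0\notin\bar{\mathcal{P}}^1_{F,1}(0)$; (vii) for all $i\in\{0,1\}$, $\pmb{b}\in\mathcal{C}^{\ast}$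 with $|\bar{\mathcal{P}}^1_{F,i}(\pmb{b})|=1$: either $f_i(s)\pmb{c}=\pmb{b}$ for some $s\in\mathcal{S}$, $\pmb{c}\in\mathcal{C}^0\cup\mathcal{C}^1$, or $(i,\pmb{b})=(1,0)$. *)

From HB Require Import structures.
From mathcomp Require Import all_boot all_order all_algebra.
Set Implicit Arguments. Unset Strict Implicit. Unset Printing Implicit Defensive.
Import Order.TTheory GRing.Theory Num.Theory.

(* Code alphabet C = {0,1} is encoded as bool: 0 = false, 1 = true.
   Codewords are seq bool; lambda = [::]; prefix = seq.prefix. *)

Record code_tuple (S : Type) (m : nat) := CodeTuple {
  ctf : 'I_m -> S -> seq bool;
  ctt : 'I_m -> S -> 'I_m
}.

Definition i0 : 'I_2 := @Ordinal 2 0 isT.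
Definition i1 : 'I_2 := @Ordinal 2 1 isT.

Section CT.
Variables (S : Type) (m : nat) (F : code_tuple S m).

Fixpoint fstar (i : 'I_m) (x : seq S) : seq bool :=
  match x with
  | [::] => [::]
  | s :: x' => ctf F i s ++ fstar (ctt F i s) x'
  end.

Definition pprefix (b w : seq bool) : bool := prefix b w && (b != w).

Definition Pk (k : nat) (i : 'I_m) (b c : seq bool) : Prop :=
  size c = k /\
  exists (s : S) (x' : seq S),
    prefix (b ++ c) (fstar i (s :: x')) /\ prefix b (ctf F i s).

Definition Pbk (k : nat) (i : 'I_m) (b c : seq bool) : Prop :=
  size c = k /\
  exists (s : S) (x' : seq S),
    prefix (b ++ c) (fstar i (s :: x')) /\ pprefix b (ctf F i s).

Definition dec2 : Prop :=
  (forall (i : 'I_m) (s : S) (c : seq bool),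
      ~ (Pk 2 (ctt F i s) [::] c /\ Pbk 2 i (ctf F i s) c)) /\
  (forall (i : 'I_m) (s s' : S), s <> s' -> ctf F i s = ctf F i s' ->
      forall c : seq bool,
      ~ (Pk 2 (ctt F i s) [::] c /\ Pk 2 (ctt F i s') [::] c)).
End CT.

Section Reg.
Variables (R : realFieldType) (S : finType) (mu : S -> R) (m : nat)
          (F : code_tuple S m).

Definition Qmx : 'M[R]_m :=
  (\matrix_(i, j) \sum_(s | ctt F i s == j) mu s)%R.

Definition regular : Prop :=
  exists! pi : 'rV[R]_m,
    ((pi *m Qmx)%R = pi /\ (\sum_(i < m) pi ord0 i)%R = 1%R).
End Reg.

Section Classes.
Variables (R : realFieldType) (S : finType) (mu : S -> R).

Definition in_F4 (F : code_tuple S 2) : Prop :=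
  regular mu F /\ dec2 F /\
  (forall c, Pk F 2 i0 [::] c <->
     c \in [:: [:: false; false]; [:: false; true];
               [:: true; false]; [:: true; true]]) /\
  (forall c, Pk F 2 i1 [::] c <->
     c \in [:: [:: false; true]; [:: true; false]; [:: true; true]]).

Definition in_FAIFV (F : code_tuple S 2) : Prop :=
  (* (i) *)
  injective (ctf F i0) /\ injective (ctf F i1) /\
  (* (ii) *)
  (forall (i : 'I_2) (s : S),
     ~ Pbk F 1 i (ctf F i s) [:: true] /\
     ~ Pbk F 1 i (ctf F i s ++ [:: false]) [:: true]) /\
  (* (iii) *)
  (forall (i : 'I_2) (s s' : S), ctf F i s' <> ctf F i s ++ [:: false]) /\
  (* (iv) *)
  (forall (i : 'I_2) (s : S),
     ((forall c, ~ Pbk F 0 i (ctf F i s) c) -> ctt F i s = i0) /\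
     ((exists c, Pbk F 0 i (ctf F i s) c) -> ctt F i s = i1)) /\
  (* (v) *)
  (forall s : S, ctf F i1 s <> [::] /\ ctf F i1 s <> [:: false]) /\
  (* (vi) *)
  ~ Pbk F 1 i1 [:: false] [:: false] /\
  (* (vii) *)
  (forall (i : 'I_2) (b : seq bool),
     (exists c0, forall c, Pbk F 1 i b c <-> c = c0) ->
     (exists (s : S) (c : seq bool), size c <= 1 /\ ctf F i s ++ c = b)
     \/ (i = i1 /\ b = [:: false])).
End Classes.

(* Read each code table f_i as a binary tree of codewords.  Conditions (ii) and (iii)
   force every proper extension of a codeword to continue with 00; by (iv) such a
   codeword moves to table 1, where (v) and (vi) forbid an encoding starting with 00.
   This gives 2-bit delay decodability and 00 \notin P^2_{F,1}.  Condition (vii) makes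
   every node of depth at most one binary unless it is a codeword (or the node 0 of
   table 1), which yields every other pair in P^2_{F,0} and P^2_{F,1}; an empty
   codeword of f_0 leads to table 1, and its proper extensions supply 00.  Finally a
   longest codeword of f_1 is a leaf, so tau_1 hits table 0 and the two-state chain
   Q(F) has a unique stationary law. *)

From HB Require Import structures.
From mathcomp Require Import all_boot all_order all_algebra ring.
Import Order.TTheory GRing.Theory Num.Theory.
Set Implicit Arguments. Unset Strict Implicit. Unset Printing Implicit Defensive.

Lemma prefix_cat2l (u c w : seq bool) : prefix (u ++ c) (u ++ w) = prefix c w.
Proof. by rewrite prefix_catr // eqxx. Qed.

Lemma prefix_catr_small (u v w : seq bool) :
  size u <= size v -> prefix u (v ++ w) -> prefix u v.
Proof.
move=> le_uv; rewrite !prefixE take_cat; case: ltnP => // le_vu.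
by rewrite (@anti_leq (size u) (size v)) ?le_uv // subnn take0 cats0 take_size.
Qed.

Lemma pprefix_size (b w : seq bool) : pprefix b w -> size b < size w.
Proof.
case/andP=> pre_bw neq_bw; rewrite ltn_neqAle size_prefix // andbT.
by apply: contra neq_bw => /eqP eq_size; move: pre_bw; rewrite prefixE eq_size take_size eq_sym.
Qed.

Lemma ord2P (j : 'I_2) : j = i0 \/ j = i1.
Proof. by case: j => [[|[|//]]] lt_j; [left|right]; apply: val_inj. Qed.

Lemma i0_neq_i1 : i0 <> i1. Proof. by move/(congr1 val). Qed.

Section CodeTree.
Variables (S : Type) (m : nat) (F : code_tuple S m).

Definition in_code_tree (i : 'I_m) (b : seq bool) : Prop :=
  exists s, prefix b (ctf F i s).

Definition starts_encoding (i : 'I_m) (c : seq bool) : Prop :=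
  exists s x, prefix c (fstar F i (s :: x)).

Lemma Pk_nil_iff k i c : Pk F k i [::] c <-> size c = k /\ starts_encoding i c.
Proof.
split=> [[size_c [s [x [pre_c _]]]] | [size_c [s [x pre_c]]]]; split=> //.
  by exists s, x.
by exists s, x; rewrite prefix0s.
Qed.

Lemma Pbk0_iff i b c : Pbk F 0 i b c <-> c = [::] /\ exists s, pprefix b (ctf F i s).
Proof.
split=> [[/size0nil -> [s [_ [_ pre_b]]]] | [-> [s pre_b]]]; first by split=> //; exists s.
split=> //; exists s, [::]; rewrite /= !cats0 pre_b.
by case/andP: pre_b.
Qed.

Lemma Pbk1_iff i b c : Pbk F 1 i b c <-> size c = 1 /\ in_code_tree i (b ++ c).
Proof.
split=> [[size_c [s [x [pre_bc pre_b]]]] | [size_c [s pre_bc]]]; split=> //.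
  exists s; apply: prefix_catr_small pre_bc.
  by rewrite size_cat size_c addn1; apply: pprefix_size.
exists s, [::]; rewrite /= cats0 pre_bc /pprefix (catl_prefix pre_bc).
split=> //; apply/eqP=> eq_b; move: (size_prefix pre_bc).
by rewrite size_cat -eq_b size_c addn1 ltnn.
Qed.

Lemma starts_encoding_codeword i b : in_code_tree i b -> starts_encoding i b.
Proof. by case=> s pre_b; exists s, [::]; apply: prefix_catl. Qed.

Lemma starts_encoding_cat i s c :
  starts_encoding (ctt F i s) c -> starts_encoding i (ctf F i s ++ c).
Proof. by case=> s' [x pre_c]; exists s, (s' :: x); rewrite [fstar _ _ _]/= prefix_cat2l. Qed.

End CodeTree.

Section AIFV.
Variables (S : finType) (F : code_tuple S 2).
Hypothesis S_gt1 : 1 < #|S|.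
Hypothesis F_AIFV : in_FAIFV F.

Lemma aifv_inj i : injective (ctf F i).
Proof. by case: F_AIFV => inj0 [inj1 _]; case: (ord2P i) => ->. Qed.

Lemma codeword_no_child1 i s : ~ in_code_tree F i (ctf F i s ++ [:: true]).
Proof. by case: F_AIFV => _ [_ [no1 _]] tree1; apply: (no1 i s).1; apply/Pbk1_iff. Qed.

Lemma codeword0_no_child1 i s : ~ in_code_tree F i (ctf F i s ++ [:: false; true]).
Proof.
by case: F_AIFV => _ [_ [no1 _]] tree1; apply: (no1 i s).2; apply/Pbk1_iff; rewrite -catA.
Qed.

Lemma codeword_cat0 i s s' : ctf F i s' <> ctf F i s ++ [:: false].
Proof. by case: F_AIFV => _ [_ [_ [no_cat0 _]]]. Qed.

Lemma tau_inner i s s' : pprefix (ctf F i s) (ctf F i s') -> ctt F i s = i1.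
Proof.
case: F_AIFV => _ [_ [_ [_ [tau _]]]] inner.
by apply: (tau i s).2; exists [::]; apply/Pbk0_iff; split=> //; exists s'.
Qed.

Lemma tau_leaf i s : (forall s', ~~ pprefix (ctf F i s) (ctf F i s')) -> ctt F i s = i0.
Proof.
case: F_AIFV => _ [_ [_ [_ [tau _]]]] leaf.
by apply: (tau i s).1 => c /Pbk0_iff [_ [s' inner]]; move: (leaf s'); rewrite inner.
Qed.

Lemma codeword1_neq_nil s : ctf F i1 s != [::].
Proof. by case: F_AIFV => _ [_ [_ [_ [_ [nil0 _]]]]]; apply/eqP; case: (nil0 s). Qed.

Lemma codeword1_neq0 s : ctf F i1 s != [:: false].
Proof. by case: F_AIFV => _ [_ [_ [_ [_ [nil0 _]]]]]; apply/eqP; case: (nil0 s). Qed.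

Lemma code_tree1_no00 : ~ in_code_tree F i1 [:: false; false].
Proof. by case: F_AIFV => _ [_ [_ [_ [_ [_ [no00 _]]]]]] tree00; apply: no00; apply/Pbk1_iff. Qed.

Lemma codeword_extension00 i s s' :
  pprefix (ctf F i s) (ctf F i s') -> prefix (ctf F i s ++ [:: false; false]) (ctf F i s').
Proof.
case/andP=> /prefixP [r def_s'] neq_s'.
case: r def_s' neq_s' => [|[] [|[] r]] def_s' neq_s'.
- by rewrite def_s' cats0 eqxx in neq_s'.
- by case: (@codeword_no_child1 i s); exists s'; rewrite def_s' prefix_refl.
- by case: (@codeword_no_child1 i s); exists s'; rewrite def_s' prefix_cat2l /= ?prefix0s.
- by case: (@codeword_no_child1 i s); exists s'; rewrite def_s' prefix_cat2l /= ?prefix0s.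
- by case: (codeword_cat0 def_s').
- by case: (@codeword0_no_child1 i s); exists s'; rewrite def_s' prefix_cat2l /= ?prefix0s.
by rewrite def_s' prefix_cat2l /= ?prefix0s.
Qed.

Lemma short_node_children i b beta :
  size b <= 1 -> (forall s, ctf F i s != [::]) -> (forall s, ctf F i s != b) ->
  ~ (i = i1 /\ b = [:: false]) ->
  in_code_tree F i (b ++ [:: beta]) -> forall g, in_code_tree F i (b ++ [:: g]).
Proof.
move=> size_b ne_nil ne_b not_exc child_beta.
suff child_nbeta : in_code_tree F i (b ++ [:: ~~ beta]).
  by case; case: beta child_beta child_nbeta.
case: (boolP [exists s, prefix (b ++ [:: ~~ beta]) (ctf F i s)]) => [/existsP // |].
move=> /existsPn no_nbeta.
have only_beta : exists c0, forall c, Pbk F 1 i b c <-> c = c0.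
  exists [:: beta] => c; rewrite Pbk1_iff; split=> [[] | ->] //.
  case: c => [|x []] // _ [s child_x]; congr [:: _].
  by apply: contraNeq (no_nbeta s); rewrite eq_sym negb_eqb => /addbP ->.
case: F_AIFV => _ [_ [_ [_ [_ [_ [_ single_child]]]]]].
case: (single_child i b only_beta) => // [[s [c [size_c def_b]]]].
case: c size_c def_b => [|x []] // _ def_b.
  by move: (ne_b s); rewrite -def_b cats0 eqxx.
by move: size_b (ne_nil s); rewrite -def_b size_cat addn1 ltnS leqn0 size_eq0 => ->.
Qed.

Lemma root_children i : (forall s, ctf F i s != [::]) -> forall g, in_code_tree F i [:: g].
Proof.
move=> ne_nil g; case/card_gt1P: S_gt1 => s0 _.
case def_s0: (ctf F i s0) (ne_nil s0) => [|beta w] // _.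
apply: (@short_node_children i [::] beta) => //; first by case.
by exists s0; rewrite def_s0 /= eqxx prefix0s.
Qed.

Lemma empty_codeword_pprefix i e :
  ctf F i e = [::] -> exists s, pprefix (ctf F i e) (ctf F i s).
Proof.
move=> def_e; case/card_gt1P: S_gt1 => x [y [_ _ ne_xy]].
have [s ne_se] : exists s, s != e.
  by case: (eqVneq x e) => [<-|]; [exists y; rewrite eq_sym | exists x].
exists s; rewrite /pprefix def_e prefix0s /= eq_sym -def_e.
by apply: contra ne_se => /eqP/aifv_inj ->.
Qed.

Lemma starts_encoding_empty_codeword i e c :
  ctf F i e = [::] -> starts_encoding F i1 c -> starts_encoding F i c.
Proof.
move=> def_e; have [s /tau_inner tau_e] := empty_codeword_pprefix def_e.
by have := @starts_encoding_cat _ _ F i e c; rewrite tau_e def_e.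
Qed.

Lemma starts_encoding_bit i g : starts_encoding F i [:: g].
Proof.
have start1 g' : starts_encoding F i1 [:: g'].
  exact/starts_encoding_codeword/root_children/codeword1_neq_nil.
case: (boolP [exists e, ctf F i e == [::]]) => [/existsP [e /eqP def_e] | /existsPn ne_nil].
  exact: starts_encoding_empty_codeword def_e (start1 g).
exact/starts_encoding_codeword/root_children.
Qed.

Lemma starts_encoding_pair i beta g :
  (forall s, ctf F i s != [::]) -> ~ (i = i1 /\ beta = false) ->
  in_code_tree F i [:: beta] -> starts_encoding F i [:: beta; g].
Proof.
move=> ne_nil not_exc [s child_beta].
case: (boolP [exists e, ctf F i e == [:: beta]]) => [/existsP [e /eqP def_e] | /existsPn ne_beta].
  by have := starts_encoding_cat (starts_encoding_bit (ctt F i e) g); rewrite def_e.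
have [d child_d] : exists d, in_code_tree F i [:: beta; d].
  case def_s: (ctf F i s) child_beta (ne_beta s) => [|x [|d w]] //=.
    by rewrite andbT => /eqP ->; rewrite eqxx.
  by rewrite andbT => /eqP -> _; exists d, s; rewrite def_s; apply: prefix_prefix.
apply/starts_encoding_codeword/(@short_node_children i [:: beta] d) => //.
by move=> [eq_i [eq_beta]]; apply: not_exc.
Qed.

Lemma starts_encoding1_not00 : ~ starts_encoding F i1 [:: false; false].
Proof.
case=> s [x]; rewrite [fstar _ _ _]/=.
case def_s: (ctf F i1 s) (codeword1_neq_nil s) (codeword1_neq0 s) => [|[] [|[] w]] //= _ _ _.
by case: code_tree1_no00; exists s; rewrite def_s; apply: prefix_prefix.
Qed.

Lemma starts_encoding1_01 : starts_encoding F i1 [:: false; true].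
Proof.
have [s child0] := root_children codeword1_neq_nil false.
apply: starts_encoding_codeword; exists s.
case def_s: (ctf F i1 s) child0 (codeword1_neq0 s) => [|[] [|[] w]] //= _ _.
  exact: prefix_prefix.
by case: code_tree1_no00; exists s; rewrite def_s; apply: prefix_prefix.
Qed.

Lemma starts_encoding1_pair a b : starts_encoding F i1 [:: a; b] <-> a || b.
Proof.
split; first by case: a; case: b => // /starts_encoding1_not00.
case: a => [_ | /= ->]; last exact: starts_encoding1_01.
apply: starts_encoding_pair; first exact: codeword1_neq_nil.
  by case=> _.
exact: root_children codeword1_neq_nil true.
Qed.

Lemma starts_encoding0_pair a b : starts_encoding F i0 [:: a; b].
Proof.
case: (boolP [exists e, ctf F i0 e == [::]]) => [/existsP [e /eqP def_e] | /existsPn ne_nil].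
  case ab: (a || b).
    by apply: (starts_encoding_empty_codeword def_e); apply/starts_encoding1_pair.
  move: ab => /norP [/negbTE -> /negbTE ->].
  have [s /codeword_extension00] := empty_codeword_pprefix def_e.
  by rewrite def_e => pre00; apply: starts_encoding_codeword; exists s.
apply: starts_encoding_pair => //; last exact: root_children.
by case=> /i0_neq_i1.
Qed.

Lemma Pk2_i0 c : Pk F 2 i0 [::] c <->
  c \in [:: [:: false; false]; [:: false; true]; [:: true; false]; [:: true; true]].
Proof.
rewrite Pk_nil_iff; split=> [[] | ].
  by case: c => [|a [|b [|]]] // _ _; case: a; case: b.
by rewrite !inE => /or4P [] /eqP ->; split=> //; apply: starts_encoding0_pair.
Qed.

Lemma Pk2_i1 c : Pk F 2 i1 [::] c <->
  c \in [:: [:: false; true]; [:: true; false]; [:: true; true]].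
Proof.
rewrite Pk_nil_iff; split=> [[] | ].
  by case: c => [|a [|b [|]]] // _ /starts_encoding1_pair; case: a; case: b.
by rewrite !inE => /or3P [] /eqP ->; split=> //; apply/starts_encoding1_pair.
Qed.

Lemma aifv_dec2 : dec2 F.
Proof.
split=> [i s c [/Pk_nil_iff [_ start_c] [size_c [s' [x [pre_c inner]]]]] |
          i s s' ne_ss' eq_f c _].
  have /prefixP [r def_s'] := codeword_extension00 inner.
  move: start_c pre_c; rewrite (tau_inner inner) [fstar _ _ _]/= def_s' -!catA prefix_cat2l.
  by case: c size_c => [|a [|b [|]]] // _ /starts_encoding1_pair; case: a; case: b.
exact: ne_ss' (aifv_inj eq_f).
Qed.

Lemma exists_tau_i0 i : exists s, ctt F i s = i0.
Proof.
case/card_gt1P: S_gt1 => s0 _.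
have [s _ longest] := @arg_maxnP _ s0 xpredT (fun s => size (ctf F i s)) isT.
exists s; apply: tau_leaf => s'; apply: contraL (longest s' isT) => /pprefix_size.
by rewrite /= -ltnNge.
Qed.

End AIFV.

Section Regularity.
Local Open Scope ring_scope.

Lemma sum_ord2 (V : nmodType) (f : 'I_2 -> V) : \sum_(i < 2) f i = f i0 + f i1.
Proof. by rewrite big_ord_recl big_ord1; congr (f _ + f _); apply: val_inj. Qed.

Lemma stochastic2_unique_stationary (K : fieldType) (Q : 'M[K]_2) :
  (forall i, Q i i0 + Q i i1 = 1) -> Q i0 i1 + Q i1 i0 != 0 ->
  exists! pi : 'rV[K]_2, pi *m Q = pi /\ \sum_(i < 2) pi ord0 i = 1.
Proof.
move=> row_sum nz_ab.
have Q00 : Q i0 i0 = 1 - Q i0 i1 by rewrite -(row_sum i0) addrK.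
have Q11 : Q i1 i1 = 1 - Q i1 i0 by rewrite -(row_sum i1) addrC addKr.
have mulQ (p : 'rV[K]_2) j : (p *m Q) ord0 j = p ord0 i0 * Q i0 j + p ord0 i1 * Q i1 j.
  by rewrite mxE sum_ord2.
exists (\row_j ((if j == i0 then Q i1 i0 else Q i0 i1) / (Q i0 i1 + Q i1 i0))); split.
  split; last by rewrite sum_ord2 !mxE /=; field.
  by apply/rowP => j; rewrite mulQ !mxE; case: (ord2P j) => -> /=; rewrite ?Q00 ?Q11; field.
move=> p [/rowP/(_ i0) fix0 sum1]; rewrite mulQ Q00 in fix0; rewrite sum_ord2 in sum1.
have p1 : p ord0 i1 * (Q i0 i1 + Q i1 i0) = Q i0 i1.
  apply/eqP; rewrite -subr_eq0.
  have -> : p ord0 i1 * (Q i0 i1 + Q i1 i0) - Q i0 i1 =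
      (p ord0 i0 * (1 - Q i0 i1) + p ord0 i1 * Q i1 i0 - p ord0 i0)
      + (p ord0 i0 + p ord0 i1 - 1) * Q i0 i1 by ring.
  by rewrite fix0 sum1 !subrr mul0r addr0.
have {}p1 : p ord0 i1 = Q i0 i1 / (Q i0 i1 + Q i1 i0) by apply: (mulIf nz_ab); rewrite p1 divfK.
have p0 : p ord0 i0 = 1 - p ord0 i1 by rewrite -sum1 addrK.
apply/rowP => j; rewrite !mxE; case: (ord2P j) => -> /=.
  by rewrite p0 p1; field.
by rewrite p1.
Qed.

Variables (R : realFieldType) (S : finType) (mu : S -> R) (F : code_tuple S 2).
Hypothesis mu_gt0 : forall s, 0 < mu s.
Hypothesis mu_sum1 : \sum_s mu s = 1.

Lemma Qmx_row_sum i : Qmx mu F i i0 + Qmx mu F i i1 = 1.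
Proof.
rewrite !mxE -mu_sum1 [RHS](bigID (fun s => ctt F i s == i0)) /=.
by congr (_ + _); apply: eq_bigl => s; case: (ord2P (ctt F i s)) => ->.
Qed.

Lemma regular_of_tau10 s : ctt F i1 s = i0 -> regular mu F.
Proof.
move=> tau_s; apply: stochastic2_unique_stationary; first exact: Qmx_row_sum.
have mu_ge0 (P : pred S) : 0 <= \sum_(s' | P s') mu s' by apply: sumr_ge0 => s' _; apply: ltW.
apply/lt0r_neq0/ltr_wpDl; rewrite mxE; first exact: mu_ge0.
rewrite (bigD1 s) ?tau_s //=; apply: ltr_wpDr; [exact: mu_ge0 | exact: mu_gt0].
Qed.

End Regularity.

Unset Implicit Arguments.

Theorem lemma11 (R : realFieldType) (S : finType) (mu : S -> R)
  (HS : 1 < #|S|)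
  (Hmu_pos : forall s, (0 < mu s)%R) (Hmu_le1 : forall s, (mu s <= 1)%R)
  (Hmu_sum : (\sum_(s : S) mu s = 1)%R)
  (F : code_tuple S 2) :
  in_FAIFV F -> in_F4 mu F.
Proof.
move=> F_AIFV; have [s tau_s] := exists_tau_i0 HS F_AIFV i1.
split; first exact: regular_of_tau10 Hmu_pos Hmu_sum s tau_s.
split; first exact: aifv_dec2 HS F_AIFV.
by split=> c; [apply: Pk2_i0 | apply: Pk2_i1].
Qed.
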